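(* Let $n\ge2$ and $0<r<1$ (with $r=\alpha/\beta$, $\alpha,\beta>0$, $\alpha^2+\beta^2=1$). Let $\gamma_-^{(n)}$ be the unique root in $(0,1-r^{2/n})$ of $\alpha^2+\beta^2\gamma^n=\alpha\beta(1-\gamma)^{n/2}$, let $\gamma_+^{(n)}=1-r^{2/n}$ and $\gamma_e^{(n)}=r^{2/n}$. Set $r_1^{(n)}=(1+2^{2/n})^{-n/2}$ and $r_2^{(n)}=2^{-n/2}$ (equivalently $\alpha_1^{(n)}=1/\sqrt{1+(1+2^{2/n})^n}$ and $\alpha_2^{(n)}=1/\sqrt{1+2^n}$). Then - if $r<r_1^{(n)}$: $\gamma_e^{(n)}<\gamma_-^{(n)}<\gamma_+^{(n)}$; - if $r_1^{(n)}<r<r_2^{(n)}$: $\gamma_-^{(n)}<\gamma_e^{(n)}<\gamma_+^{(n)}$; - if $r_2^{(n)}<r<1$: $\gamma_-^{(n)}<\gamma_+^{(n)}<\gamma_e^{(n)}$. In particular for $n=2$ the boundaries are $\alpha=1/\sqrt{10}$ and $\alpha=1/\sqrt5$.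
   Context: These are the thresholds of the amplitude-damped state $\rho_n(\gamma)=\mathcal E_\gamma^{\otimes n}(|\psi_n\rangle\langle\psi_n|)$, $|\psi_n\rangle=\alpha|0^n\rangle+\beta|1^n\rangle$, where $\mathcal E_\gamma$ is single-qubit amplitude damping (Kraus operators $|0\rangle\langle0|+\sqrt{1-\gamma}|1\rangle\langle1|$ and $\sqrt\gamma|0\rangle\langle1|$): $\gamma_\mp^{(n)}$ are where the trajectory enters/exits the stabilizer polytope, and $\gamma_e^{(n)}=r^{2/n}$ is where the bipartite negativity vanishes. *)

From Stdlib Require Import Reals.
Open Scope R_scope.

Definition gamma_plus (n : nat) (r : R) : R := 1 - Rpower r (2 / INR n).
(* gamma_e^(n) = r^(2/n) : where the bipartite negativity vanishes *)
Definition gamma_e (n : nat) (r : R) : R := Rpower r (2 / INR n).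

Definition gamma_minus_eq (n : nat) (alpha beta g : R) : Prop :=
  alpha ^ 2 + beta ^ 2 * g ^ n = alpha * beta * Rpower (1 - g) (INR n / 2).

Definition r1 (n : nat) : R := Rpower (1 + Rpower 2 (2 / INR n)) (- (INR n / 2)).
Definition r2 (n : nat) : R := Rpower 2 (- (INR n / 2)).

Definition alpha1 (n : nat) : R := 1 / sqrt (1 + (1 + Rpower 2 (2 / INR n)) ^ n).
Definition alpha2 (n : nat) : R := 1 / sqrt (1 + 2 ^ n).

(* With t = r^(2/n) one has gamma_+ = 1 - t, gamma_e = t and t^n = r^2.
   Dividing the gamma_- equation by beta^2 gives F(gamma_-) = 0 for the
   strictly decreasing F(g) = r (1-g)^(n/2) - r^2 - g^n, and
   F(t) = r ((1-t)^(n/2) - (2^(2/n) t)^(n/2)).  Hence gamma_e < gamma_- exactly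
   when 2^(2/n) t < 1 - t, i.e. t < 1/(1 + 2^(2/n)), i.e. r < r_1; and
   gamma_e < gamma_+ exactly when t < 1/2, i.e. r < r_2.  The thresholds on
   alpha follow because alpha = r / sqrt(1 + r^2) is increasing in r. *)

From Stdlib Require Import Reals Lra Lia Psatz.
Open Scope R_scope.

Lemma Rpower_gt0 x y : 0 < Rpower x y.
Proof. apply exp_pos. Qed.

Lemma Rpower_lt_base_iff x y p :
  0 < p -> 0 < x -> 0 < y -> (x < y <-> Rpower x p < Rpower y p).
Proof.
  intros Hp Hx Hy; split; intro Hlt.
  - apply Rlt_Rpower_l; lra.
  - destruct (Rlt_or_le x y) as [|Hyx]; [assumption|].
    assert (Rpower y p <= Rpower x p) by (apply Rle_Rpower_l; lra); lra.
Qed.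

Lemma Rpower_Rpower_recip x p q : 0 < x -> p * q = 1 -> Rpower (Rpower x p) q = x.
Proof. intros Hx Hpq; rewrite Rpower_mult, Hpq; now apply Rpower_1. Qed.

Lemma Rpower_Ropp_recip x p q : 0 < x -> p * q = 1 -> Rpower (Rpower x (- p)) q = / x.
Proof.
  intros Hx Hpq; rewrite Rpower_mult.
  replace (- p * q) with (- (1)) by lra.
  rewrite Rpower_Ropp, Rpower_1; [reflexivity | assumption].
Qed.

Lemma root_cmp_of_decreasing (f : R -> R) a b z c :
  (forall x y, a < x < y -> y < b -> f y < f x) ->
  a < z < b -> a < c < b -> f z = 0 ->
  (0 < f c -> c < z) /\ (f c < 0 -> z < c).
Proof.
  intros Hdec Hz Hc Hfz.
  destruct (Rtotal_order c z) as [Hcz|[<-|Hzc]].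
  - assert (f z < f c) by (apply Hdec; lra); lra.
  - lra.
  - assert (f c < f z) by (apply Hdec; lra); lra.
Qed.

Definition ratio_amplitude (x : R) : R := x / sqrt (1 + x ^ 2).

Lemma ratio_amplitude_of_ratio a b :
  0 < b -> a ^ 2 + b ^ 2 = 1 -> ratio_amplitude (a / b) = a.
Proof.
  intros Hb Hab; unfold ratio_amplitude.
  replace (1 + (a / b) ^ 2) with ((/ b) ^ 2 * (a ^ 2 + b ^ 2)) by (field; lra).
  rewrite Hab, Rmult_1_r.
  rewrite sqrt_pow2 by (left; apply Rinv_0_lt_compat; lra).
  field; lra.
Qed.

Lemma ratio_amplitude_recip_sq rho M :
  0 < rho -> rho ^ 2 * M = 1 -> ratio_amplitude rho = 1 / sqrt (1 + M).
Proof.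
  intros Hrho HM; unfold ratio_amplitude.
  replace (1 + rho ^ 2) with ((1 + M) * rho ^ 2) by lra.
  rewrite sqrt_mult, sqrt_pow2 by nra.
  assert (0 < sqrt (1 + M)) by (apply sqrt_lt_R0; nra).
  field; lra.
Qed.

Lemma ratio_amplitude_lt x y : 0 <= x < y -> ratio_amplitude x < ratio_amplitude y.
Proof.
  intros Hxy; unfold ratio_amplitude.
  set (sx := sqrt (1 + x ^ 2)); set (sy := sqrt (1 + y ^ 2)).
  assert (Hsx : sx * sx = 1 + x ^ 2) by (apply sqrt_sqrt; nra).
  assert (Hsy : sy * sy = 1 + y ^ 2) by (apply sqrt_sqrt; nra).
  assert (0 < sx) by (apply sqrt_lt_R0; nra).
  assert (0 < sy) by (apply sqrt_lt_R0; nra).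
  assert (Hsq : (x * sy) * (x * sy) < (y * sx) * (y * sx)).
  { replace ((x * sy) * (x * sy)) with (x ^ 2 * (sy * sy)) by ring.
    replace ((y * sx) * (y * sx)) with (y ^ 2 * (sx * sx)) by ring.
    rewrite Hsx, Hsy; nra. }
  assert (Hcross : x * sy < y * sx).
  { destruct (Rlt_or_le (x * sy) (y * sx)) as [|Hle]; [assumption|].
    assert (0 <= y * sx) by nra.
    assert ((y * sx) * (y * sx) <= (x * sy) * (x * sy)) by (apply Rmult_le_compat; lra).
    lra. }
  apply (Rmult_lt_reg_r (sx * sy)); [nra|].
  replace (x / sx * (sx * sy)) with (x * sy) by (field; lra).
  replace (y / sy * (sx * sy)) with (y * sx) by (field; lra).
  exact Hcross.
Qed.

Lemma ratio_amplitude_lt_iff x y :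
  0 <= x -> 0 <= y -> (x < y <-> ratio_amplitude x < ratio_amplitude y).
Proof.
  intros Hx Hy; split; intro Hlt; [apply ratio_amplitude_lt; lra|].
  destruct (Rtotal_order x y) as [|[Hxy|Hyx]]; [assumption| |].
  - subst; lra.
  - assert (ratio_amplitude y < ratio_amplitude x) by (apply ratio_amplitude_lt; lra); lra.
Qed.

Section Thresholds.

Variable n : nat.
Hypothesis n_gt0 : (0 < n)%nat.

Let N := INR n.

Let N_gt0 : 0 < N.
Proof. apply lt_0_INR; lia. Qed.

Lemma inv_sqrt_1_plus_pow_ratio_amplitude x :
  0 < x -> 1 / sqrt (1 + x ^ n) = ratio_amplitude (Rpower x (- (N / 2))).
Proof.
  intros Hx; symmetry; apply ratio_amplitude_recip_sq; [apply Rpower_gt0|].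
  rewrite <- (Rpower_pow n x), <- (Rpower_pow 2) by (try apply Rpower_gt0; assumption).
  fold N; rewrite Rpower_mult, <- Rpower_plus.
  replace (- (N / 2) * INR 2 + N) with 0 by (simpl; lra).
  now apply Rpower_O.
Qed.

Definition gamma_minus_fun (r g : R) : R :=
  r * Rpower (1 - g) (N / 2) - r ^ 2 - g ^ n.

Lemma gamma_minus_fun_of_eq alpha beta r g :
  0 < beta -> r = alpha / beta -> gamma_minus_eq n alpha beta g ->
  gamma_minus_fun r g = 0.
Proof.
  unfold gamma_minus_eq, gamma_minus_fun; intros Hb -> Heq; fold N in Heq.
  apply (Rmult_eq_reg_l (beta ^ 2)); [|apply pow_nonzero; lra].
  replace alpha with (alpha / beta * beta) in Heq by (field; lra).
  lra.
Qed.

Variable r : R.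
Hypothesis r_gt0 : 0 < r.

Lemma gamma_minus_fun_decreasing g1 g2 :
  0 < g1 < g2 -> g2 < 1 -> gamma_minus_fun r g2 < gamma_minus_fun r g1.
Proof.
  intros Hg Hg2; unfold gamma_minus_fun.
  rewrite <- !Rpower_pow by lra; fold N.
  assert (Rpower g1 N < Rpower g2 N) by (apply Rlt_Rpower_l; lra).
  assert (Rpower (1 - g2) (N / 2) < Rpower (1 - g1) (N / 2)) by (apply Rlt_Rpower_l; lra).
  nra.
Qed.

Lemma gamma_e_bounds : r < 1 -> 0 < gamma_e n r < 1.
Proof.
  intros Hr1; split; [apply Rpower_gt0|].
  unfold gamma_e; fold N.
  replace 1 with (Rpower 1 (2 / N))
    by (unfold Rpower; rewrite ln_1, Rmult_0_r; apply exp_0).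
  apply Rlt_Rpower_l; [apply Rdiv_lt_0_compat|]; lra.
Qed.

Lemma gamma_e_pow : gamma_e n r ^ n = r ^ 2.
Proof.
  unfold gamma_e; fold N.
  rewrite <- Rpower_pow, <- (Rpower_pow 2), Rpower_mult by (try apply Rpower_gt0; lra).
  fold N; f_equal; simpl; field; lra.
Qed.

Lemma lt_gamma_e_iff rho :
  0 < rho ->
  (r < rho <-> gamma_e n r < Rpower rho (2 / N)) /\
  (rho < r <-> Rpower rho (2 / N) < gamma_e n r).
Proof.
  intros Hrho; assert (0 < 2 / N) by (apply Rdiv_lt_0_compat; lra).
  split; apply Rpower_lt_base_iff; lra.
Qed.

Let s := Rpower 2 (2 / N).

Lemma r1_gamma_e : Rpower (r1 n) (2 / N) = / (1 + s).
Proof.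
  apply Rpower_Ropp_recip; [|fold N; field; lra].
  assert (0 < s) by apply Rpower_gt0; lra.
Qed.

Lemma r2_gamma_e : Rpower (r2 n) (2 / N) = / 2.
Proof. apply Rpower_Ropp_recip; [lra | fold N; field; lra]. Qed.

Lemma gamma_minus_fun_gamma_e :
  gamma_minus_fun r (gamma_e n r) =
  r * (Rpower (1 - gamma_e n r) (N / 2) - Rpower (s * gamma_e n r) (N / 2)).
Proof.
  unfold gamma_minus_fun; rewrite gamma_e_pow.
  rewrite <- Rpower_mult_distr by (try apply Rpower_gt0; lra).
  unfold s, gamma_e; fold N.
  rewrite !Rpower_Rpower_recip by (try field; lra).
  ring.
Qed.

Section Root.

Hypothesis r_lt1 : r < 1.
Variable z : R.
Hypothesis z_bounds : 0 < z < 1.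
Hypothesis z_root : gamma_minus_fun r z = 0.

Let root_cmp_gamma_e :
  (0 < gamma_minus_fun r (gamma_e n r) -> gamma_e n r < z) /\
  (gamma_minus_fun r (gamma_e n r) < 0 -> z < gamma_e n r).
Proof.
  exact (root_cmp_of_decreasing _ 0 1 z _
           gamma_minus_fun_decreasing z_bounds (gamma_e_bounds r_lt1) z_root).
Qed.

Lemma gamma_e_lt_root : r < r1 n -> gamma_e n r < z.
Proof.
  intros Hr1; apply root_cmp_gamma_e.
  apply lt_gamma_e_iff in Hr1; [|apply Rpower_gt0].
  rewrite r1_gamma_e in Hr1; rewrite gamma_minus_fun_gamma_e.
  pose proof (gamma_e_bounds r_lt1) as Ht; assert (0 < s) by apply Rpower_gt0.
  assert (s * gamma_e n r < 1 - gamma_e n r).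
  { apply (Rmult_lt_compat_l (1 + s)) in Hr1; [|lra].
    rewrite Rinv_r in Hr1 by lra; lra. }
  assert (Rpower (s * gamma_e n r) (N / 2) < Rpower (1 - gamma_e n r) (N / 2))
    by (apply Rlt_Rpower_l; nra).
  nra.
Qed.

Lemma root_lt_gamma_e : r1 n < r -> z < gamma_e n r.
Proof.
  intros Hr1; apply root_cmp_gamma_e.
  apply lt_gamma_e_iff in Hr1; [|apply Rpower_gt0].
  rewrite r1_gamma_e in Hr1; rewrite gamma_minus_fun_gamma_e.
  pose proof (gamma_e_bounds r_lt1) as Ht; assert (0 < s) by apply Rpower_gt0.
  assert (1 - gamma_e n r < s * gamma_e n r).
  { apply (Rmult_lt_compat_l (1 + s)) in Hr1; [|lra].
    rewrite Rinv_r in Hr1 by lra; lra. }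
  assert (Rpower (1 - gamma_e n r) (N / 2) < Rpower (s * gamma_e n r) (N / 2))
    by (apply Rlt_Rpower_l; nra).
  nra.
Qed.

End Root.

End Thresholds.

Theorem corollary1 (n : nat) (alpha beta r gm : R) :
  (2 <= n)%nat ->
  0 < alpha -> 0 < beta -> alpha ^ 2 + beta ^ 2 = 1 ->
  r = alpha / beta -> 0 < r < 1 ->
  0 < gm < gamma_plus n r -> gamma_minus_eq n alpha beta gm ->
  ((r < r1 n -> gamma_e n r < gm < gamma_plus n r) /\
   (r1 n < r < r2 n -> gm < gamma_e n r < gamma_plus n r) /\
   (r2 n < r < 1 -> gm < gamma_plus n r < gamma_e n r)) /\
  ((r < r1 n <-> alpha < alpha1 n) /\ (r1 n < r <-> alpha1 n < alpha) /\
   (r < r2 n <-> alpha < alpha2 n) /\ (r2 n < r <-> alpha2 n < alpha)) /\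
  (n = 2%nat -> alpha1 n = 1 / sqrt 10 /\ alpha2 n = 1 / sqrt 5).
Proof.
  intros Hn Ha Hb Hab Hr [Hr0 Hr1] Hgm Heq.
  assert (Hn0 : (0 < n)%nat) by lia.
  assert (Hplus : gamma_plus n r = 1 - gamma_e n r) by reflexivity.
  rewrite Hplus in *.
  pose proof (gamma_e_bounds n Hn0 r Hr0 Hr1) as Ht.
  assert (Hroot : gamma_minus_fun n r gm = 0) by (apply (gamma_minus_fun_of_eq n alpha beta); assumption).
  assert (Hgm1 : 0 < gm < 1) by lra.
  pose proof (lt_gamma_e_iff n Hn0 r Hr0 (r2 n) (Rpower_gt0 _ _)) as Hr2.
  rewrite (r2_gamma_e n Hn0) in Hr2.
  split; [split; [|split] | split].
  - intros Hlt; split; [|lra].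
    apply (gamma_e_lt_root n Hn0 r Hr0 Hr1 gm); assumption.
  - intros [Hlt1 Hlt2]; apply Hr2 in Hlt2; split; [|lra].
    apply (root_lt_gamma_e n Hn0 r Hr0 Hr1 gm); assumption.
  - intros [Hlt _]; apply Hr2 in Hlt; lra.
  - assert (0 < Rpower 2 (2 / INR n)) by apply Rpower_gt0.
    assert (0 < r1 n /\ 0 < r2 n) as [] by (split; apply Rpower_gt0).
    replace alpha with (ratio_amplitude r) by (subst r; apply ratio_amplitude_of_ratio; lra).
    unfold alpha1, alpha2; rewrite !inv_sqrt_1_plus_pow_ratio_amplitude by lra.
    fold (r1 n) (r2 n).
    repeat split; apply ratio_amplitude_lt_iff; lra.
  - intros ->; unfold alpha1, alpha2.
    replace (2 / INR 2) with 1 by (simpl; field).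
    rewrite Rpower_1 by lra; split; do 3 f_equal; simpl; ring.
Qed.
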